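(* Let $b\in\mathbb{R}\setminus\{0\}$ and let $\nu_1,\nu_2:\mathbb{R}^2\to\mathbb{R}$ be smooth functions of $(j,t)$ with $\nu_2(0,0)=0$ and $$\nu_1(0,0)=0,\qquad \frac{\partial \nu_1}{\partial j}(0,0)=0,\qquad \frac{\partial^2 \nu_1}{\partial j^2}(0,0)\neq 0,\qquad \frac{\partial \nu_1}{\partial t}(0,0)\neq 0.$$ Define $\mathrm{disc}_b(j,t):=\nu_2(j,t)^2-4b\,\nu_1(j,t)$. Then the saddle-node bifurcations associated to $\nu_1$ and $\mathrm{disc}_b$ are concave in the same direction if $$\frac{1}{2b}\,\frac{\left(\frac{\partial \nu_2}{\partial j}(0,0)\right)^2}{\frac{\partial^2 \nu_1}{\partial j^2}(0,0)}<1 .$$ If the inequality is reversed, they are concave in opposite directions. If equality holds, the double flip bifurcation is degenerate, i.e. $\frac{\partial^2 \mathrm{disc}_b}{\partial j^2}(0,0)=0$.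
   Context: For a smooth function $g(j,t)$ with $g(0,0)=0$, $\partial_j g(0,0)=0$, $\partial_j^2 g(0,0)\neq 0$, $\partial_t g(0,0)\neq 0$ (the conditions for the ODE $dj/dt=g(j,t)$ to undergo a saddle-node bifurcation at the origin), the zero set $\{g=0\}$ near the origin is a curve $t=\gamma(j)$ of parabolic shape with $\gamma(0)=\gamma'(0)=0$; the associated saddle-node bifurcation is called concave up if $\partial_j^2 g(0,0)\,\partial_t g(0,0)<0$ and concave down if $\partial_j^2 g(0,0)\,\partial_t g(0,0)>0$. One has $\partial_j \mathrm{disc}_b(0,0)=0$ and $\partial_t\mathrm{disc}_b(0,0)=-4b\,\partial_t\nu_1(0,0)\neq0$, so $\mathrm{disc}_b$ satisfies the saddle-node conditions exactly when $\partial_j^2\mathrm{disc}_b(0,0)=2(\partial_j\nu_2(0,0))^2-4b\,\partial_j^2\nu_1(0,0)\neq0$; the double flip bifurcation (of the Hamiltonian $H_{j,t}(q,p)=\frac{a}{2}p^2+\frac{b}{6}q^6+\frac{\nu_1(j,t)}{2}q^2+\frac{\nu_2(j,t)}{4}q^4$) is called non-degenerate if this quantity is non-zero and degenerate otherwise. *)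

From Stdlib Require Import Reals.
From Coquelicot Require Import Coquelicot.
Open Scope R_scope.

Definition dj (g : R -> R -> R) : R -> R -> R :=
  fun j t => Derive (fun x => g x t) j.
Definition dt (g : R -> R -> R) : R -> R -> R :=
  fun j t => Derive (fun y => g j y) t.

Fixpoint Cn (n : nat) (g : R -> R -> R) : Prop :=
  match n with
  | O => forall j t, continuity_2d_pt g j t
  | S m =>
      (forall j t, continuity_2d_pt g j t) /\
      (forall j t, ex_derive (fun x => g x t) j /\ ex_derive (fun y => g j y) t) /\
      Cn m (dj g) /\ Cn m (dt g)
  end.

Definition smooth2 (g : R -> R -> R) : Prop := forall n, Cn n g.

Definition saddle_node (g : R -> R -> R) : Prop :=
  g 0 0 = 0 /\ dj g 0 0 = 0 /\ dj (dj g) 0 0 <> 0 /\ dt g 0 0 <> 0.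

Definition concave_up (g : R -> R -> R) : Prop :=
  saddle_node g /\ dj (dj g) 0 0 * dt g 0 0 < 0.
Definition concave_down (g : R -> R -> R) : Prop :=
  saddle_node g /\ dj (dj g) 0 0 * dt g 0 0 > 0.

Definition same_direction (g h : R -> R -> R) : Prop :=
  (concave_up g /\ concave_up h) \/ (concave_down g /\ concave_down h).
Definition opposite_direction (g h : R -> R -> R) : Prop :=
  (concave_up g /\ concave_down h) \/ (concave_down g /\ concave_up h).

Definition discb (b : R) (nu1 nu2 : R -> R -> R) : R -> R -> R :=
  fun j t => (nu2 j t) ^ 2 - 4 * b * nu1 j t.

(* At the origin disc_b vanishes together with its j-derivative, because nu1 and nu2 do.
   Its t-derivative is -4 b d_t nu1, and its second j-derivative is
   2 (d_j nu2)^2 - 4 b d_j^2 nu1 = 4 b (d_j^2 nu1) (q - 1).  Hence the concavity product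
   d_j^2 disc_b * d_t disc_b equals 16 b^2 (1 - q) times d_j^2 nu1 * d_t nu1, whose sign
   is therefore that of nu1 flipped exactly when q > 1. *)
From Stdlib Require Import Reals Lra.
From Coquelicot Require Import Coquelicot.
Open Scope R_scope.

Lemma Cn_S_weaken (n : nat) (g : R -> R -> R) : Cn (S n) g -> Cn n g.
Proof.
  revert g; induction n as [| n IH]; intros g [Hc [Hd [Hj Ht]]].
  - exact Hc.
  - exact (conj Hc (conj Hd (conj (IH _ Hj) (IH _ Ht)))).
Qed.

Lemma Cn_S_ex_derive_j (n : nat) (g : R -> R -> R) :
  Cn (S n) g -> forall j t, ex_derive (fun x => g x t) j.
Proof. intros [_ [Hd _]] j t. exact (proj1 (Hd j t)). Qed.

Lemma Cn_S_ex_derive_t (n : nat) (g : R -> R -> R) :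
  Cn (S n) g -> forall j t, ex_derive (fun y => g j y) t.
Proof. intros [_ [Hd _]] j t. exact (proj2 (Hd j t)). Qed.

Lemma Cn_S_dj (n : nat) (g : R -> R -> R) : Cn (S n) g -> Cn n (dj g).
Proof. intros [_ [_ [Hj _]]]. exact Hj. Qed.

Lemma dj_discb (b : R) (nu1 nu2 : R -> R -> R) :
  Cn 1 nu1 -> Cn 1 nu2 ->
  forall j t, dj (discb b nu1 nu2) j t = 2 * nu2 j t * dj nu2 j t - 4 * b * dj nu1 j t.
Proof.
  intros C1 C2 j t. unfold dj, discb.
  apply is_derive_unique. auto_derive.
  - repeat split; [apply (Cn_S_ex_derive_j _ _ C2) | apply (Cn_S_ex_derive_j _ _ C1)].
  - ring.
Qed.

Lemma dt_discb (b : R) (nu1 nu2 : R -> R -> R) :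
  Cn 1 nu1 -> Cn 1 nu2 ->
  forall j t, dt (discb b nu1 nu2) j t = 2 * nu2 j t * dt nu2 j t - 4 * b * dt nu1 j t.
Proof.
  intros C1 C2 j t. unfold dt, discb.
  apply is_derive_unique. auto_derive.
  - repeat split; [apply (Cn_S_ex_derive_t _ _ C2) | apply (Cn_S_ex_derive_t _ _ C1)].
  - ring.
Qed.

Lemma dj_dj_discb (b : R) (nu1 nu2 : R -> R -> R) :
  Cn 2 nu1 -> Cn 2 nu2 ->
  forall j t, dj (dj (discb b nu1 nu2)) j t =
    2 * (dj nu2 j t ^ 2 + nu2 j t * dj (dj nu2) j t) - 4 * b * dj (dj nu1) j t.
Proof.
  intros C1 C2 j t.
  assert (D1 := Cn_S_ex_derive_j _ _ (Cn_S_dj _ _ C1)).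
  assert (D2 := Cn_S_ex_derive_j _ _ (Cn_S_dj _ _ C2)).
  assert (E2 := Cn_S_ex_derive_j _ _ C2).
  unfold dj at 1.
  rewrite (Derive_ext _ (fun x => 2 * nu2 x t * dj nu2 x t - 4 * b * dj nu1 x t))
    by (intro; apply dj_discb; apply Cn_S_weaken; assumption).
  apply is_derive_unique. auto_derive.
  - repeat split; [apply E2 | apply D2 | apply D1].
  - unfold dj. ring.
Qed.

Lemma saddle_node_of_curvature (h : R -> R -> R) :
  h 0 0 = 0 -> dj h 0 0 = 0 -> dj (dj h) 0 0 * dt h 0 0 <> 0 -> saddle_node h.
Proof.
  intros H0 H1 Hp. repeat split; auto; intro E; apply Hp; rewrite E; ring.
Qed.

Lemma saddle_node_curvature_neq0 (g : R -> R -> R) :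
  saddle_node g -> dj (dj g) 0 0 * dt g 0 0 <> 0.
Proof. intros (_ & _ & Hjj & Ht). apply Rmult_integral_contrapositive; auto. Qed.

Lemma same_direction_of_scaled_curvature (g h : R -> R -> R) (k : R) :
  saddle_node g -> h 0 0 = 0 -> dj h 0 0 = 0 -> 0 < k ->
  dj (dj h) 0 0 * dt h 0 0 = k * (dj (dj g) 0 0 * dt g 0 0) ->
  same_direction g h.
Proof.
  intros Sg H0 H1 Hk E.
  assert (Pg := saddle_node_curvature_neq0 g Sg).
  assert (Sh : saddle_node h).
  { apply saddle_node_of_curvature; auto.
    rewrite E. apply Rmult_integral_contrapositive; split; lra. }
  destruct (Rdichotomy _ _ Pg); [left | right];
    (split; split; [exact Sg | assumption | exact Sh | rewrite E; nra]).
Qed.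

Lemma opposite_direction_of_scaled_curvature (g h : R -> R -> R) (k : R) :
  saddle_node g -> h 0 0 = 0 -> dj h 0 0 = 0 -> k < 0 ->
  dj (dj h) 0 0 * dt h 0 0 = k * (dj (dj g) 0 0 * dt g 0 0) ->
  opposite_direction g h.
Proof.
  intros Sg H0 H1 Hk E.
  assert (Pg := saddle_node_curvature_neq0 g Sg).
  assert (Sh : saddle_node h).
  { apply saddle_node_of_curvature; auto.
    rewrite E. apply Rmult_integral_contrapositive; split; lra. }
  destruct (Rdichotomy _ _ Pg); [left | right];
    (split; split; [exact Sg | assumption | exact Sh | rewrite E; nra]).
Qed.

Theorem theorem4p2 (b : R) (nu1 nu2 : R -> R -> R) :
  b <> 0 ->
  smooth2 nu1 -> smooth2 nu2 ->
  nu2 0 0 = 0 ->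
  nu1 0 0 = 0 -> dj nu1 0 0 = 0 -> dj (dj nu1) 0 0 <> 0 -> dt nu1 0 0 <> 0 ->
  let q := / (2 * b) * ((dj nu2 0 0) ^ 2 / dj (dj nu1) 0 0) in
  (q < 1 -> same_direction nu1 (discb b nu1 nu2)) /\
  (q > 1 -> opposite_direction nu1 (discb b nu1 nu2)) /\
  (q = 1 -> dj (dj (discb b nu1 nu2)) 0 0 = 0).
Proof.
  intros Hb S1 S2 H20 H10 H1j H1jj H1t q.
  assert (Sn1 : saddle_node nu1) by (repeat split; assumption).
  assert (D0 : discb b nu1 nu2 0 0 = 0) by (unfold discb; rewrite H20, H10; ring).
  assert (DJ0 : dj (discb b nu1 nu2) 0 0 = 0)
    by (rewrite dj_discb, H20, H1j by auto; ring).
  assert (DT0 : dt (discb b nu1 nu2) 0 0 = - 4 * b * dt nu1 0 0)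
    by (rewrite dt_discb, H20 by auto; ring).
  assert (DJJ0 : dj (dj (discb b nu1 nu2)) 0 0 = 4 * b * dj (dj nu1) 0 0 * (q - 1)).
  { rewrite dj_dj_discb, H20 by auto. unfold q. field. auto. }
  assert (Curv : dj (dj (discb b nu1 nu2)) 0 0 * dt (discb b nu1 nu2) 0 0 =
                 16 * b ^ 2 * (1 - q) * (dj (dj nu1) 0 0 * dt nu1 0 0))
    by (rewrite DJJ0, DT0; ring).
  assert (Hb2 : 0 < b ^ 2) by (apply pow2_gt_0; exact Hb).
  repeat split; intro Hq.
  - apply (same_direction_of_scaled_curvature _ _ (16 * b ^ 2 * (1 - q))); auto. nra.
  - apply (opposite_direction_of_scaled_curvature _ _ (16 * b ^ 2 * (1 - q))); auto. nra.
  - rewrite DJJ0, Hq. ring.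
Qed.
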